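(* Let $\mathsf{K}$ be a free simplicial $\mathbb{Z}_2$-complex with $\operatorname{ind}(\mathsf{K})=n-1$, and let $\lambda_1,\ldots,\lambda_m$ be Fan labelings of $\mathsf{K}$ with labels in $\{\pm1,\ldots,\pm N\}$. For any choice of positive integers $\ell_1,\ldots,\ell_N$ with $\ell_1+\cdots+\ell_N=m+N-1$, there exist a simplex $\sigma=\langle v_1,\ldots,v_n\rangle$ of $\mathsf{K}$ (with vertices $v_1,\ldots,v_n$), integers $1\le j_1\le\cdots\le j_n\le N$, and indices $i_1,\ldots,i_n\in[m]$ such that: (a) $\lambda_{i_k}(v_k)=(-1)^k j_k$ for each $k\in[n]$; (b) for each $k\ge2$, if $j_{k-1}=j_k$ then $i_{k-1}<i_k$; (c) for each $k\in[n]$, the label $+j_k$ or the label $-j_k$ is present on the vertices of $\sigma$ in at least $\ell_{j_k}$ of the labelings $\lambda_1,\ldots,\lambda_m$.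
   Context: A free simplicial $\mathbb{Z}_2$-complex is a simplicial complex with a free simplicial $\mathbb{Z}_2$-action. A Fan labeling is a labeling of its vertices by non-zero integers such that (i) no two adjacent vertices have labels summing to zero, and (ii) the two vertices of any orbit have labels summing to zero. The $\mathbb{Z}_2$-index $\operatorname{ind}(\mathsf{K})$ is the minimal $d$ such that there is a continuous map from $\mathsf{K}$ to $\mathcal{S}^d$ commuting with the $\mathbb{Z}_2$-actions (antipodal map on $\mathcal{S}^d$). *)

From HB Require Import structures.
From mathcomp Require Import all_boot all_order all_algebra.
From mathcomp Require Import all_classical all_reals topology normedtype.
From mathcomp Require Import Rstruct Rstruct_topology.
Set Implicit Arguments. Unset Strict Implicit. Unset Printing Implicit Defensive.
Import Order.TTheory GRing.Theory Num.Theory.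
Local Open Scope ring_scope.

Notation RR := Rdefinitions.R.

Definition simplicial_complex (p : nat) (K : {set {set 'I_p}}) : Prop :=
  finset.set0 \in K /\
  (forall s t : {set 'I_p}, s \in K -> t \subset s -> t \in K) /\
  (forall v : 'I_p, [set v] \in K).

(* nu is a free simplicial Z2-action on K: an involution mapping simplices
   to simplices and fixing no nonempty simplex (equivalently, the induced
   action on the geometric realization has no fixed point). *)
Definition free_Z2_action (p : nat) (K : {set {set 'I_p}}) (nu : 'I_p -> 'I_p)
  : Prop :=
  (forall v, nu (nu v) = v) /\
  (forall s, s \in K -> nu @: s \in K) /\
  (forall s, s \in K -> s != finset.set0 -> nu @: s != s).

Definition fan_labeling (p : nat) (K : {set {set 'I_p}}) (nu : 'I_p -> 'I_p)
  (lam : 'I_p -> int) : Prop :=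
  (forall v, lam v != 0) /\
  (forall u v, u != v -> [set u; v] \in K -> lam u + lam v != 0) /\
  (forall v, lam (nu v) = - lam v).

(* Geometric realization |K| inside R^p (barycentric coordinates). *)
Definition realization (p : nat) (K : {set {set 'I_p}}) : set 'rV[RR]_p :=
  fun x => (forall i, 0 <= x ord0 i) /\ \sum_i x ord0 i = 1 /\
           [set i | x ord0 i != 0] \in K.

Definition Z2act (p : nat) (nu : 'I_p -> 'I_p) (x : 'rV[RR]_p) : 'rV[RR]_p :=
  \row_i x ord0 (nu i).

Definition on_sphere (d : nat) (y : 'rV[RR]_d) : Prop :=
  \sum_j y ord0 j ^+ 2 = 1.

Definition equivariant_sphere_map (p : nat) (K : {set {set 'I_p}})
  (nu : 'I_p -> 'I_p) (d : nat) : Prop :=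
  exists f : 'rV[RR]_p -> 'rV[RR]_d,
    ({within realization K, continuous f})%classic /\
    (forall x, realization K x -> on_sphere (f x)) /\
    (forall x, realization K x -> f (Z2act nu x) = - f x).

(* ind(K) = n - 1 : the minimal dimension of a sphere receiving an
   equivariant map is n - 1 (S^(n-1) lives in R^n). *)
Definition Z2_index_is_pred (p : nat) (K : {set {set 'I_p}})
  (nu : 'I_p -> 'I_p) (n : nat) : Prop :=
  equivariant_sphere_map K nu n /\
  (forall d : nat, (d < n)%N -> ~ equivariant_sphere_map K nu d).

(* Merge the m labelings into a single Fan labeling of K: a vertex v gets the
   label ±(j m + i), where j is the least label value such that at least ℓ_j of
   the labelings give v a label ±j, i is such a labeling, and the sign is that
   of λ_i(v).  Fan's lemma then provides a simplex carrying an alternating chain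
   -a_1, +a_2, -a_3, ... with 0 < a_1 < ... < a_n, and decoding the a_k gives
   the j_k and i_k.

   If no simplex carries an
   alternating chain of length n, then on every simplex σ a polynomial P of
   degree < n - 1, with one root between consecutive sign changes of the
   labels ordered by absolute value, satisfies sign(λ v) P(|λ v|) > 0 for all
   v in σ.  Hence the odd map x |-> Σ_v x_v λ(v) (1, |λ v|, ..., |λ v|^(n-2))
   has positive pairing with the coefficients of P on |σ|, so it never
   vanishes on |K| and normalizes to an equivariant map |K| -> S^(n-2),
   contradicting ind(K) = n - 1. *)

From HB Require Import structures.
From mathcomp Require Import all_boot all_order all_algebra.
From mathcomp Require Import all_classical all_reals topology normedtype.
From mathcomp Require Import Rstruct Rstruct_topology realfun.
From mathcomp Require Import zify ring lra.
Import Order.TTheory GRing.Theory Num.Theory.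
Local Open Scope ring_scope.
Set Implicit Arguments. Unset Strict Implicit. Unset Printing Implicit Defensive.

Lemma intrM_gt0 (R : realDomainType) (a b : int) :
  a != 0 -> b != 0 -> (a < 0) = (b < 0) -> 0 < (a%:~R : R) * b%:~R.
Proof. by move=> a0 b0 ab; rewrite -rmorphM /= ltr0z; lia. Qed.

Lemma intrM_lt0 (R : realDomainType) (a b : int) :
  a != 0 -> b != 0 -> (a < 0) != (b < 0) -> (a%:~R : R) * b%:~R < 0.
Proof. by move=> a0 b0 ab; rewrite -rmorphM /= ltrz0; lia. Qed.

Section AlternatingChains.
Variables (V : finType) (L : V -> int).

Definition alt_step : rel V := fun u w =>
  (absz (L u) < absz (L w))%N && ((L u < 0) != (L w < 0)).

Definition alt_chain_bounded (S : {set V}) (k : nat) : Prop :=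
  forall l, all (mem S) l -> sorted alt_step l -> (size l <= k)%N.

Definition no_opposite_labels (S : {set V}) : Prop :=
  forall u v, u \in S -> v \in S -> L u + L v != 0.

Lemma no_opposite_labels_neq0 (S : {set V}) (v : V) :
  no_opposite_labels S -> v \in S -> L v != 0.
Proof. by move=> noopp vS; apply: contraNneq (noopp v v vS vS) => ->. Qed.

Lemma alt_chain_bounded_cut (S : {set V}) (us vs : V) (k : nat) :
  no_opposite_labels S -> us \in S -> vs \in S ->
  (L us < 0) != (L vs < 0) -> (absz (L us) < absz (L vs))%N ->
  alt_chain_bounded S k.+1 ->
  alt_chain_bounded [set v in S | (absz (L v) <= absz (L us))%N] k.
Proof.
move=> noopp usS vsS us_vs us_lt bounded [//|x l] lS' /= chain.
have lS : all (mem S) (x :: l).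
  by apply: sub_all lS' => v; rewrite /= inE => /andP[].
set w := last x l.
have : w \in [set v in S | (absz (L v) <= absz (L us))%N].
  by apply: (allP lS'); rewrite mem_last.
rewrite inE => /andP[wS w_le].
have [w_vs|w_vs] := eqVneq (L w < 0) (L vs < 0).
  (* a chain ending on the side of [vs] below [us] extends by [us] and [vs] *)
  have w_lt : (absz (L w) < absz (L us))%N.
    rewrite ltn_neqAle w_le andbT; apply/negP => /eqP w_us.
    by move: (noopp w us wS usS) us_vs; rewrite -w_vs; lia.
  have := bounded (rcons (rcons (x :: l) us) vs).
  rewrite !all_rcons lS !inE usS vsS !size_rcons /= !rcons_path chain last_rcons.
  rewrite /alt_step -/w w_lt us_lt w_vs (eq_sym (L vs < 0)) us_vs.
  by move=> /(_ isT isT); lia.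
have := bounded (rcons (x :: l) vs).
rewrite all_rcons lS inE vsS size_rcons /= rcons_path chain /alt_step -/w w_vs.
by rewrite (leq_ltn_trans w_le us_lt) => /(_ isT isT).
Qed.

Definition separates_signs (R : numDomainType) (P : {poly R}) (S : {set V}) :=
  forall v, v \in S -> 0 < (L v)%:~R * P.[(absz (L v))%:R].

(* multiplying by the factor [|L us| + 1/2 - X] flips the sign of [P] exactly
   on the labels above [|L us|] *)
Lemma separating_poly_extend (R : realFieldType) (k : nat) (S : {set V})
    (us vs : V) (P : {poly R}) :
  no_opposite_labels S -> us \in S -> vs \in S -> (L us < 0) != (L vs < 0) ->
  (absz (L us) < absz (L vs))%N ->
  (forall u, u \in S -> (L u < 0) != (L vs < 0) -> (absz (L u) <= absz (L us))%N) ->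
  (size P <= k)%N -> separates_signs P [set v in S | (absz (L v) <= absz (L us))%N] ->
  (forall t : R, (absz (L us))%:R <= t -> 0 < (L us)%:~R * P.[t]) ->
  exists Q : {poly R}, [/\ (size Q <= k.+1)%N, separates_signs Q S &
    forall t : R, (absz (L vs))%:R <= t -> 0 < (L vs)%:~R * Q.[t]].
Proof.
move=> noopp usS vsS us_vs us_lt us_max sizeP sepP P_above.
set T := absz (L us) in us_lt us_max sepP P_above.
have nz v : v \in S -> L v != 0 by apply: no_opposite_labels_neq0.
pose c : R := T%:R + 2^-1.
have QE t : (P * (c%:P - 'X)).[t] = P.[t] * (c - t).
  by rewrite hornerM hornerD hornerN hornerC hornerX.
have Q_above v t : v \in S -> (L v < 0) = (L vs < 0) -> T%:R + 1 <= t ->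
    0 < (L v)%:~R * (P * (c%:P - 'X)).[t].
  move=> vS v_vs t_ge; rewrite QE.
  have Pt : 0 < (L us)%:~R * P.[t] by apply: P_above; lra.
  have v_us : (L v)%:~R * (L us)%:~R < 0 :> R.
    by apply: intrM_lt0; rewrite ?nz // v_vs eq_sym.
  have vP : (L v)%:~R * P.[t] < 0 by nra.
  have : (2^-1 : R) < 1 by rewrite invf_lt1 // ltr1n.
  by rewrite mulrA nmulr_rgt0 // /c; lra.
exists (P * (c%:P - 'X)); split=> [|v vS|t t_ge].
- apply: (leq_trans (size_polyMleq _ _)).
  by rewrite -opprB size_polyN size_XsubC addn2 ltnS.
- have [v_le|v_gt] := leqP (absz (L v)) T.
    rewrite QE mulrA pmulr_lgt0 ?sepP ?inE ?vS //.
    have : (absz (L v))%:R <= T%:R :> R by rewrite ler_nat.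
    have : (0 : R) < 2^-1 by rewrite invr_gt0 ltr0n.
    rewrite /c; lra.
  apply: Q_above; rewrite // ?natr1 ?ler_nat //.
  by apply: contraTeq v_gt => v_vs; rewrite -leqNgt us_max.
- by apply: Q_above; rewrite // (le_trans _ t_ge) // natr1 ler_nat.
Qed.

Lemma separating_poly_at_max (R : realFieldType) (k : nat) (S : {set V}) (vs : V) :
  vs \in S -> (forall v, v \in S -> (absz (L v) <= absz (L vs))%N) ->
  no_opposite_labels S -> alt_chain_bounded S k ->
  exists P : {poly R}, [/\ (size P <= k)%N, separates_signs P S &
    forall t : R, (absz (L vs))%:R <= t -> 0 < (L vs)%:~R * P.[t]].
Proof.
elim: k S vs => [|k IH] S vs vsS vs_max noopp bounded.
  by have := bounded [:: vs]; rewrite /= vsS => /(_ isT isT).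
have nz v : v \in S -> L v != 0 by apply: no_opposite_labels_neq0.
set D := [set u in S | (L u < 0) != (L vs < 0)].
have [D0|[u0 u0D]] := set_0Vmem D.
  exists (L vs)%:~R%:P; split=> [|v vS|t _]; rewrite ?hornerC.
  - by rewrite (leq_trans (size_polyC_leq1 _)).
  - have : v \notin D by rewrite D0 inE.
    by rewrite inE vS negbK => /eqP v_vs; apply: intrM_gt0; rewrite ?nz.
  - by apply: intrM_gt0; rewrite ?nz.
pose us := [arg max_(u > u0 in D) absz (L u)].
have [usD us_max] : us \in D /\ forall u, u \in D -> (absz (L u) <= absz (L us))%N.
  by rewrite /us; case: arg_maxnP.
move: usD; rewrite inE => /andP[usS us_vs].
have us_lt : (absz (L us) < absz (L vs))%N.
  rewrite ltn_neqAle vs_max // andbT; apply/negP => /eqP us_eq.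
  by move: (noopp us vs usS vsS) us_vs; lia.
set S' := [set v in S | (absz (L v) <= absz (L us))%N].
have usS' : us \in S' by rewrite inE usS leqnn.
have us_max' v : v \in S' -> (absz (L v) <= absz (L us))%N.
  by rewrite inE => /andP[].
have noopp' : no_opposite_labels S'.
  by move=> u v; rewrite !inE => /andP[uS _] /andP[vS _]; apply: noopp.
have [P [sizeP sepP P_above]] := IH S' us usS' us_max' noopp'
  (alt_chain_bounded_cut noopp usS vsS us_vs us_lt bounded).
apply: (separating_poly_extend noopp usS vsS us_vs us_lt _ sizeP sepP P_above).
by move=> u uS u_vs; apply: us_max; rewrite inE uS.
Qed.

Lemma exists_separating_poly (R : realFieldType) (k : nat) (S : {set V}) (v0 : V) :
  v0 \in S -> no_opposite_labels S -> alt_chain_bounded S k ->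
  exists2 P : {poly R}, (size P <= k)%N & separates_signs P S.
Proof.
move=> v0S noopp bounded.
pose vs := [arg max_(v > v0 in S) absz (L v)].
have [vsS vs_max] : vs \in S /\ forall v, v \in S -> (absz (L v) <= absz (L vs))%N.
  by rewrite /vs; case: arg_maxnP.
by have [P []] := separating_poly_at_max R vsS vs_max noopp bounded; exists P.
Qed.

Lemma alt_chain_abs_lt (x0 : V) (l : seq V) (i j : nat) :
  sorted alt_step l -> (i < j)%N -> (j < size l)%N ->
  (absz (L (nth x0 l i)) < absz (L (nth x0 l j)))%N.
Proof.
move=> chain ij jl.
have trans : transitive (relpre (fun v => absz (L v)) ltn).
  by move=> b a c; apply: ltn_trans.
apply: (sorted_ltn_nth trans x0 (sub_sorted _ chain)); rewrite ?inE //.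
- by move=> u w /andP[].
- exact: ltn_trans ij jl.
Qed.

Lemma alt_chain_sign (x : V) (l : seq V) (i : nat) :
  sorted alt_step (x :: l) -> L x < 0 -> (i <= size l)%N ->
  (L (nth x (x :: l) i) < 0) = ~~ odd i.
Proof.
move=> chain x_neg; elim: i => [|i IH] il; first by rewrite /= x_neg.
have /(_ il) /andP[_] := (sortedP x chain) i.
by rewrite (IH (ltnW il)) /= negbK; case: (odd i); case: (_ < 0).
Qed.

Lemma alt_step_opp (nu : V -> V) (u w : V) :
  (forall v, L (nu v) = - L v) -> L u != 0 -> L w != 0 ->
  alt_step (nu u) (nu w) = alt_step u w.
Proof.
move=> L_nu u0 w0; rewrite /alt_step !L_nu !abszN !oppr_lt0 !lt0r u0 w0 /=.
by rewrite !leNgt; case: (L u < 0); case: (L w < 0).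
Qed.

End AlternatingChains.

Section EquivariantSphereMaps.
Variables (p d : nat) (K : {set {set 'I_p}}) (nu : 'I_p -> 'I_p).

Definition sqnorm (y : 'rV[RR]_d) : RR := \sum_j y ord0 j ^+ 2.

Lemma sqnorm_ge0 (y : 'rV[RR]_d) : 0 <= sqnorm y.
Proof. by apply: sumr_ge0 => j _; exact: sqr_ge0. Qed.

Lemma sqnorm_gt0 (y : 'rV[RR]_d) : y != 0 -> 0 < sqnorm y.
Proof.
move=> y0; rewrite lt_def sqnorm_ge0 andbT; apply: contra y0 => /eqP y2_0.
apply/eqP/rowP => j; rewrite mxE; apply/eqP.
by rewrite -sqrf_eq0 (psumr_eq0P (fun j _ => sqr_ge0 (y ord0 j)) y2_0).
Qed.

Lemma sqnormN (y : 'rV[RR]_d) : sqnorm (- y) = sqnorm y.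
Proof. by apply: eq_bigr => j _; rewrite mxE sqrrN. Qed.

Lemma sqnorm_continuous : continuous sqnorm.
Proof.
apply: continuous_big => [|j _ y]; first exact: (@add_continuous RR^o).
apply: (@continuous_comp _ _ _ (fun y : 'rV[RR]_d => y ord0 j) (fun r => r ^+ 2)).
  exact: coord_continuous.
exact: exprn_continuous.
Qed.

Lemma equivariant_sphere_map_normalize (F : 'rV[RR]_p -> 'rV[RR]_d) :
  continuous F -> (forall x, F (Z2act nu x) = - F x) ->
  (forall x, realization K x -> F x != 0) ->
  equivariant_sphere_map K nu d.
Proof.
move=> F_cont F_odd F_neq0.
pose r x := (Num.sqrt (sqnorm (F x)))^-1.
exists (fun x => r x *: F x); split; [|split].
- apply: continuous_in_subspaceT => x; rewrite inE => /F_neq0/sqnorm_gt0 Fx_gt0.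
  apply: (@continuousZ _ _ _ r F x); last exact: F_cont.
  apply: continuousV; first by rewrite gt_eqF // sqrtr_gt0.
  apply: (@continuous_comp _ _ _ (sqnorm \o F) (@Num.sqrt RR)).
    by apply: (@continuous_comp _ _ _ F sqnorm); [exact: F_cont|exact: sqnorm_continuous].
  exact: sqrt_continuous.
- move=> x /F_neq0/sqnorm_gt0 Fx_gt0; rewrite /on_sphere.
  under eq_bigr do rewrite mxE exprMn.
  by rewrite -mulr_sumr exprVn sqr_sqrtr ?sqnorm_ge0 // mulVf // gt_eqF.
- by move=> x _; rewrite /r F_odd sqnormN scalerN.
Qed.

Variable L : 'I_p -> int.

Definition moment_vector (v : 'I_p) : 'rV[RR]_d :=
  \row_(j < d) ((L v)%:~R * (absz (L v))%:R ^+ j).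

Definition moment_map (x : 'rV[RR]_p) : 'rV[RR]_d :=
  \sum_v x ord0 v *: moment_vector v.

Lemma moment_map_continuous : continuous moment_map.
Proof.
apply: continuous_big => [|v _ x]; first exact: add_continuous.
by apply: continuousZr_tmp; exact: coord_continuous.
Qed.

Lemma moment_map_odd (x : 'rV[RR]_p) :
  involutive nu -> (forall v, L (nu v) = - L v) ->
  moment_map (Z2act nu x) = - moment_map x.
Proof.
move=> nuK L_nu; rewrite /moment_map /Z2act; under eq_bigr do rewrite mxE.
rewrite (reindex_inj (can_inj nuK)) /= -sumrN; apply: eq_bigr => v _.
rewrite nuK -scalerN; congr (_ *: _); apply/rowP => j.
by rewrite !mxE L_nu abszN rmorphN mulNr.
Qed.

Lemma moment_map_pairing (P : {poly RR}) (x : 'rV[RR]_p) : (size P <= d)%N ->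
  \sum_(j < d) P`_j * moment_map x ord0 j =
  \sum_v x ord0 v * ((L v)%:~R * P.[(absz (L v))%:R]).
Proof.
move=> sizeP; rewrite /moment_map; under eq_bigr do rewrite summxE mulr_sumr.
rewrite exchange_big; apply: eq_bigr => v _.
rewrite (horner_coef_wide _ sizeP) !mulr_sumr; apply: eq_bigr => j _.
by rewrite !mxE; ring.
Qed.

Lemma moment_map_neq0 (x : 'rV[RR]_p) : realization K x ->
  no_opposite_labels L [set i | x ord0 i != 0] ->
  alt_chain_bounded L [set i | x ord0 i != 0] d ->
  moment_map x != 0.
Proof.
move=> [x_ge0 [x_sum _]]; set S := [set i | _] => noopp bounded.
have [v0 v0S] : exists v0, v0 \in S.
  have [S0|[v v_in]] := set_0Vmem S; last by exists v.
  move: x_sum; rewrite big1 => [/esym/eqP|i _]; first by rewrite oner_eq0.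
  have : i \notin S by rewrite S0 inE.
  by rewrite inE negbK => /eqP.
have [P sizeP sepP] := exists_separating_poly RR v0S noopp bounded.
have term_ge0 v : 0 <= x ord0 v * ((L v)%:~R * P.[(absz (L v))%:R]).
  have [vS|] := boolP (v \in S); first by rewrite mulr_ge0 ?x_ge0 // ltW ?sepP.
  by rewrite inE negbK => /eqP ->; rewrite mul0r.
have term_v0 : 0 < x ord0 v0 * ((L v0)%:~R * P.[(absz (L v0))%:R]).
  by rewrite mulr_gt0 ?sepP // lt0r x_ge0 andbT; rewrite inE in v0S.
apply/eqP => F0; move: (moment_map_pairing x sizeP); rewrite F0.
rewrite big1 => [/esym/eqP|j _]; last by rewrite mxE mulr0.
by rewrite psumr_eq0 // => /allP/(_ v0 (mem_index_enum _)); rewrite gt_eqF.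
Qed.

Lemma equivariant_sphere_map_of_alt_chain_bounded :
  involutive nu -> (forall v, L (nu v) = - L v) ->
  (forall s, s \in K -> no_opposite_labels L s) ->
  (forall s, s \in K -> alt_chain_bounded L s d) ->
  equivariant_sphere_map K nu d.
Proof.
move=> nuK L_nu noopp bounded.
apply: (equivariant_sphere_map_normalize moment_map_continuous).
  by move=> x; apply: moment_map_odd.
by move=> x xK; apply: moment_map_neq0 => //; [apply: noopp|apply: bounded];
  case: xK => _ [].
Qed.

End EquivariantSphereMaps.

Lemma Fan_alternating_chain (p d : nat) (K : {set {set 'I_p}})
    (nu : 'I_p -> 'I_p) (L : 'I_p -> int) :
  involutive nu -> (forall s, s \in K -> nu @: s \in K) ->
  (forall v, L (nu v) = - L v) ->
  (forall s, s \in K -> no_opposite_labels L s) ->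
  ~ equivariant_sphere_map K nu d ->
  exists s x l, [/\ s \in K, all (mem s) (x :: l),
    sorted (alt_step L) (x :: l), size l = d & L x < 0].
Proof.
move=> nuK nuS L_nu noopp no_map.
have [s [l [sK ls chain l_gt]]] : exists s l, [/\ s \in K, all (mem s) l,
    sorted (alt_step L) l & (d < size l)%N].
  apply: contrapT => no_chain; apply: no_map.
  apply: equivariant_sphere_map_of_alt_chain_bounded nuK L_nu noopp _ => s sK l.
  move=> ls chain; rewrite leqNgt; apply/negP => l_gt.
  by apply: no_chain; exists s, l.
have size_take : size (take d.+1 l) = d.+1 by rewrite size_takel.
have ls' : all (mem s) (take d.+1 l) by apply/allP => z /mem_take /(allP ls).
move: size_take ls' (take_sorted d.+1 chain).
case: (take d.+1 l) => [//|x l'] [size_l'] xl's chain'.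
have [x_neg|x_nneg] := boolP (L x < 0); first by exists s, x, l'.
have L_neq0 := no_opposite_labels_neq0 (noopp s sK).
(* otherwise the antipodal chain starts with a negative label *)
exists (nu @: s), (nu x), (map nu l'); split.
- exact: nuS.
- by rewrite -map_cons; apply/allP => _ /mapP[y /(allP xl's) ys ->]; exact: imset_f.
- rewrite -map_cons sorted_map; apply: sub_in_sorted xl's chain' => u w us ws.
  by rewrite /= alt_step_opp // L_neq0.
- by rewrite size_map.
- rewrite L_nu oppr_lt0 lt0r leNgt x_nneg L_neq0 //.
  exact: (allP xl's x (mem_head x l')).
Qed.

Lemma signed_absz (z : int) (k : nat) :
  (z < 0) = ~~ odd k -> z = (-1) ^+ k.+1 * (absz z)%:Z.
Proof.
by rewrite -signr_odd /=; case: (odd k) => /= z_sign;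
  rewrite ?expr0 ?expr1 ?mul1r ?mulN1r; lia.
Qed.

Definition heavy_label (N : nat) (ell : nat -> nat) (m : nat) (g : 'I_m -> nat) :=
  head 0%N [seq j <- iota 1 N | (ell j <= #|[set t | g t == j]|)%N].

Lemma sum_card_preim (m N : nat) (g : 'I_m -> nat) :
  (forall t, (1 <= g t <= N)%N) ->
  (\sum_(1 <= j < N.+1) #|[set t | g t == j]| = m)%N.
Proof.
move=> g_range.
have cardE j : #|[set t | g t == j]| = (\sum_t (g t == j))%N.
  by rewrite -sum1_card big_mkcond; apply: eq_bigr => t _; rewrite inE; case: eqP.
under eq_bigr do rewrite cardE.
rewrite exchange_big /= -[RHS]card_ord -sum1_card; apply: eq_bigr => t _.
rewrite (bigD1_seq (g t)) ?iota_uniq ?mem_index_iota ?ltnS //= eqxx big1 //.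
by move=> j; rewrite eq_sym => /negPf ->.
Qed.

Lemma heavy_labelP (N : nat) (ell : nat -> nat) (m : nat) (g : 'I_m -> nat) :
  (forall t, (1 <= g t <= N)%N) ->
  (\sum_(1 <= j < N.+1) ell j + 1 = m + N)%N ->
  (1 <= heavy_label N ell g <= N)%N /\
  (ell (heavy_label N ell g) <= #|[set t | g t == heavy_label N ell g]|)%N.
Proof.
move=> g_range ell_sum; rewrite /heavy_label.
case E: [seq j <- _ | _] => [|j s] /=; last first.
  have : j \in j :: s by rewrite mem_head.
  by rewrite -E mem_filter mem_iota => /andP[heavy j_range]; split => //; lia.
(* pigeonhole: otherwise [m] would be at most [\sum_j (ell j - 1) = m - 1] *)
have light j : (1 <= j <= N)%N -> (#|[set t | g t == j]| < ell j)%N.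
  move=> j_range; rewrite ltnNge; apply/negP => heavy.
  have : j \in [seq j <- iota 1 N | (ell j <= #|[set t | g t == j]|)%N].
    by rewrite mem_filter heavy mem_iota; lia.
  by rewrite E.
have : (\sum_(1 <= j < N.+1) (#|[set t | g t == j]| + 1) <=
        \sum_(1 <= j < N.+1) ell j)%N.
  rewrite big_nat_cond [leqRHS]big_nat_cond; apply: leq_sum => j /andP[j_range _].
  by rewrite addn1 light //; lia.
by rewrite big_split /= sum_card_preim // sum_nat_const_nat muln1 subn1; lia.
Qed.

Lemma labelings_gt0 (m N : nat) (ell : nat -> nat) :
  (forall j, (1 <= j <= N)%N -> (0 < ell j)%N) ->
  (\sum_(1 <= j < N.+1) ell j + 1 = m + N)%N -> (0 < m)%N.
Proof.
move=> ell_gt0 ell_sum.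
have : (\sum_(1 <= j < N.+1) 1 <= \sum_(1 <= j < N.+1) ell j)%N.
  rewrite big_nat_cond [leqRHS]big_nat_cond.
  by apply: leq_sum => j /andP[/ell_gt0 + _].
by rewrite sum_nat_const_nat muln1 subn1; lia.
Qed.

Section MergedLabeling.
Variables (p m N : nat) (K : {set {set 'I_p}}) (nu : 'I_p -> 'I_p).
Variables (lam : 'I_m -> 'I_p -> int) (ell : nat -> nat).
Hypothesis K_closed : forall s t : {set 'I_p}, s \in K -> t \subset s -> t \in K.
Hypothesis lam_fan : forall t, fan_labeling K nu (lam t).
Hypothesis lam_le : forall t v, (absz (lam t v) <= N)%N.
Hypothesis ell_gt0 : forall j, (1 <= j <= N)%N -> (0 < ell j)%N.
Hypothesis ell_sum : (\sum_(1 <= j < N.+1) ell j + 1 = m + N)%N.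
(* [t0] is only a default value for [pick]; its existence records [0 < m] *)
Variable t0 : 'I_m.

Let m_gt0 : (0 < m)%N := leq_ltn_trans (leq0n t0) (ltn_ord t0).

Definition merged_level (v : 'I_p) : nat :=
  heavy_label N ell (fun t => absz (lam t v)).

Lemma merged_levelP (v : 'I_p) :
  (1 <= merged_level v <= N)%N /\
  (ell (merged_level v) <= #|[set t | absz (lam t v) == merged_level v]|)%N.
Proof.
apply: heavy_labelP ell_sum => t.
by rewrite lam_le andbT absz_gt0; case: (lam_fan t).
Qed.

Definition merged_index (v : 'I_p) : 'I_m :=
  odflt t0 [pick t | absz (lam t v) == merged_level v].

Lemma merged_indexP (v : 'I_p) : absz (lam (merged_index v) v) = merged_level v.
Proof.
rewrite /merged_index; case: pickP => [t /eqP //|none].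
have [/ell_gt0 ell_pos heavy] := merged_levelP v.
move: (leq_trans ell_pos heavy); rewrite lt0n cards_eq0 => /set0Pn[t].
by rewrite inE none.
Qed.

Definition merged_abs (v : 'I_p) : nat := merged_level v * m + merged_index v.

Definition merged_label (v : 'I_p) : int :=
  (-1) ^+ (lam (merged_index v) v < 0)%R * (merged_abs v)%:Z.

Lemma merged_abs_divn (v : 'I_p) : (merged_abs v %/ m)%N = merged_level v.
Proof. by rewrite divnMDl // divn_small // addn0. Qed.

Lemma merged_abs_modn (v : 'I_p) : (merged_abs v %% m)%N = merged_index v.
Proof. by rewrite modnMDl modn_small. Qed.

Lemma abs_merged_label (v : 'I_p) : absz (merged_label v) = merged_abs v.
Proof. by rewrite abszMsign. Qed.

Lemma merged_label_lt0 (v : 'I_p) :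
  (merged_label v < 0) = (lam (merged_index v) v < 0).
Proof.
rewrite pmulr_llt0 ?signr_lt0 // ltz_nat /merged_abs.
by have [/andP[lvl_gt0 _] _] := merged_levelP v; rewrite addn_gt0 muln_gt0 lvl_gt0 m_gt0.
Qed.

Lemma merged_label_opp (v : 'I_p) : merged_label (nu v) = - merged_label v.
Proof.
have abs_nu t : absz (lam t (nu v)) = absz (lam t v).
  by case: (lam_fan t) => _ [_ ->]; rewrite abszN.
have lvl_nu : merged_level (nu v) = merged_level v.
  by rewrite /merged_level; congr heavy_label; apply/funext => t; apply: abs_nu.
have idx_nu : merged_index (nu v) = merged_index v.
  by rewrite /merged_index lvl_nu; congr odflt; apply: eq_pick => t; rewrite /= abs_nu.
rewrite /merged_label /merged_abs lvl_nu idx_nu.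
case: (lam_fan (merged_index v)) => lam_neq0 [_ ->].
by rewrite oppr_lt0 lt0r lam_neq0 /= leNgt signrN mulNr.
Qed.

Lemma merged_label_neq0 (v : 'I_p) : merged_label v != 0.
Proof.
rewrite -absz_eq0 abs_merged_label /merged_abs -lt0n addn_gt0 muln_gt0.
by rewrite m_gt0; case: (merged_levelP v) => /andP[->].
Qed.

Lemma merged_no_opposite (s : {set 'I_p}) :
  s \in K -> no_opposite_labels merged_label s.
Proof.
move=> sK u v us vs; apply/negP => /eqP opp.
have abs_eq : merged_abs u = merged_abs v.
  have opp' : merged_label u = - merged_label v by apply/eqP; rewrite -addr_eq0 opp.
  by rewrite -!abs_merged_label opp' abszN.
have lvl_eq : merged_level u = merged_level v by rewrite -!merged_abs_divn abs_eq.
have idx_eq : merged_index u = merged_index v.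
  by apply: val_inj; rewrite /= -!merged_abs_modn abs_eq.
have uv : u != v.
  apply: contra_eq_neq opp => <-.
  by rewrite -mulr2n mulrn_eq0 /= merged_label_neq0.
have uvK : [set u; v] \in K.
  by apply: K_closed sK _; apply/fintype.subsetP => w; rewrite !inE => /orP[] /eqP ->.
case: (lam_fan (merged_index u)) => lam_neq0 [/(_ u v uv uvK) + _].
(* both vertices carry opposite labels [±j] in the labeling they select *)
move: (merged_indexP u) (merged_indexP v) (merged_label_lt0 u) (merged_label_lt0 v).
rewrite -idx_eq -lvl_eq; have := merged_label_neq0 u.
by have := lam_neq0 u; have := lam_neq0 v; lia.
Qed.

Definition alternating_witness (n : nat) (v : 'I_n -> 'I_p) (jj : 'I_n -> nat)
    (ii : 'I_n -> 'I_m) : Prop :=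
  injective v /\
  [set v k | k : 'I_n] \in K /\
  (forall k : 'I_n, (1 <= jj k <= N)%N) /\
  (forall k k' : 'I_n, (k <= k')%N -> (jj k <= jj k')%N) /\
  (forall k : 'I_n, lam (ii k) (v k) = (-1) ^+ k.+1 * (jj k)%:Z) /\
  (forall k k' : 'I_n, k'.+1 = k -> jj k' = jj k -> (ii k' < ii k)%N) /\
  (forall k : 'I_n,
     (ell (jj k) <= #|[set t : 'I_m | [exists q : 'I_n,
         (lam t (v q) == (jj k)%:Z) || (lam t (v q) == - (jj k)%:Z)]]|)%N).

Lemma alternating_witness0 :
  finset.set0 \in K -> exists (v : 'I_0 -> 'I_p) jj ii, alternating_witness v jj ii.
Proof.
move=> K0; have no_ord0 : 'I_0 -> False by case.
exists (fun k => False_rect _ (no_ord0 k)), (fun _ => 0%N).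
exists (fun k => False_rect _ (no_ord0 k)).
split; first by move=> k; case: (no_ord0 k).
split.
  rewrite (_ : [set _ | k : 'I_0] = finset.set0) //.
  by apply/setP => w; rewrite inE; apply/imsetP => -[k]; case: (no_ord0 k).
by do 4 (split; first by move=> k; case: (no_ord0 k)); move=> k; case: (no_ord0 k).
Qed.

Lemma alternating_witness_of_chain (s : {set 'I_p}) (x : 'I_p) (l : seq 'I_p) :
  s \in K -> all (mem s) (x :: l) -> sorted (alt_step merged_label) (x :: l) ->
  merged_label x < 0 ->
  exists (v : 'I_(size l).+1 -> 'I_p) jj ii, alternating_witness v jj ii.
Proof.
move=> sK xls chain x_neg.
pose v (k : 'I_(size l).+1) := nth x (x :: l) k.
have abs_lt (i j : 'I_(size l).+1) :
    (i < j)%N -> (merged_abs (v i) < merged_abs (v j))%N.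
  by move=> ij; rewrite -!abs_merged_label; apply: alt_chain_abs_lt.
exists v, (merged_level \o v), (merged_index \o v).
have v_inj : injective v.
  move=> i j vij; apply: val_inj.
  by case: (ltngtP i j) => // /abs_lt; rewrite vij ltnn.
have vK : [set v k | k : 'I_(size l).+1] \in K.
  apply: K_closed sK _; apply/fintype.subsetP => _ /imsetP[k _ ->].
  by apply: (allP xls); rewrite mem_nth.
have lvl_mono (k k' : 'I_(size l).+1) :
    (k <= k')%N -> (merged_level (v k) <= merged_level (v k'))%N.
  rewrite leq_eqVlt => /orP[/eqP/val_inj -> //|kk'].
  by rewrite -!merged_abs_divn leq_div2r // ltnW ?abs_lt.
have lam_v (k : 'I_(size l).+1) :
    lam (merged_index (v k)) (v k) = (-1) ^+ k.+1 * (merged_level (v k))%:Z.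
  rewrite -merged_indexP -signed_absz // -merged_label_lt0.
  exact: alt_chain_sign chain x_neg (ltn_ord k).
have idx_lt (k k' : 'I_(size l).+1) : k'.+1 = k ->
    merged_level (v k') = merged_level (v k) ->
    (merged_index (v k') < merged_index (v k))%N.
  move=> kk' lvl_eq; have := abs_lt k' k; rewrite -kk' ltnSn /merged_abs lvl_eq.
  by rewrite ltn_add2l => /(_ isT).
have heavy (k : 'I_(size l).+1) : (ell (merged_level (v k)) <=
    #|[set t : 'I_m | [exists q, (lam t (v q) == (merged_level (v k))%:Z) ||
                                (lam t (v q) == - (merged_level (v k))%:Z)]]|)%N.
  apply: leq_trans (merged_levelP (v k)).2 (subset_leq_card _).
  apply/fintype.subsetP => t; rewrite !inE => /eqP abs_t; apply/existsP; exists k.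
  by apply/orP; lia.
exact: (conj v_inj (conj vK (conj (fun k => (merged_levelP (v k)).1)
  (conj lvl_mono (conj lam_v (conj idx_lt heavy)))))).
Qed.

End MergedLabeling.

Theorem theorem3p5 (p : nat) (K : {set {set 'I_p}}) (nu : 'I_p -> 'I_p)
  (n m N : nat) (lam : 'I_m -> 'I_p -> int) (ell : nat -> nat) :
  simplicial_complex K ->
  free_Z2_action K nu ->
  Z2_index_is_pred K nu n ->
  (forall t, fan_labeling K nu (lam t)) ->
  (forall t v, (absz (lam t v) <= N)%N) ->
  (forall j, (1 <= j <= N)%N -> (0 < ell j)%N) ->
  (\sum_(1 <= j < N.+1) ell j + 1 = m + N)%N ->
  exists (v : 'I_n -> 'I_p) (jj : 'I_n -> nat) (ii : 'I_n -> 'I_m),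
    injective v /\
        [set v k | k : 'I_n] \in K /\
        (forall k : 'I_n, (1 <= jj k <= N)%N) /\
        (forall k k' : 'I_n, (k <= k')%N -> (jj k <= jj k')%N) /\
        (forall k : 'I_n, lam (ii k) (v k) = (-1) ^+ k.+1 * (jj k)%:Z) /\
        (forall k k' : 'I_n, k'.+1 = k -> jj k' = jj k -> (ii k' < ii k)%N) /\
        (forall k : 'I_n,
           (ell (jj k) <= #|[set t : 'I_m | [exists q : 'I_n,
               (lam t (v q) == (jj k)%:Z) || (lam t (v q) == - (jj k)%:Z)]]|)%N).
Proof.
move=> [K0 [K_closed _]] [nuK [nuS _]] [_ no_map] lam_fan lam_le ell_gt0 ell_sum.
case: n no_map => [|d] no_map; first exact: alternating_witness0.
pose t0 := Ordinal (labelings_gt0 ell_gt0 ell_sum).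
have [s [x [l [sK xls chain <- x_neg]]]] := Fan_alternating_chain nuK nuS
  (merged_label_opp N ell lam_fan t0)
  (merged_no_opposite K_closed lam_fan lam_le ell_gt0 ell_sum t0) (no_map d (ltnSn d)).
exact (alternating_witness_of_chain K_closed lam_fan lam_le ell_gt0 ell_sum sK xls chain
  x_neg).
Qed.
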